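(* Let $\mathbb{F}$ be a field of odd characteristic that is algebraic over its prime subfield. Then the following are equivalent: (1) $\mathbb{F}=\mathbb{F}_5$; (2) $\operatorname{Aut}(\mathbb{F})\subsetneq SD(\mathbb{F})$; (4) a square root of $-1$ in $\mathbb{F}$ generates the multiplicative group $\mathbb{F}^\times$. Moreover, if $\mathbb{F}$ is finite, these are also equivalent to: (3) the map $\mathbb{F}\to\mathbb{F}$ which fixes every square in $\mathbb{F}$ and sends every non-square $w$ to $-w$ is an SD-map.
   Context: A map $f:\mathbb{F}\to\widetilde{\mathbb{F}}$ between fields is called an SD-map if for all $x\neq y$ in $\mathbb{F}$ one has $f(x)\neq f(y)$ and \[ f\left(\frac{x+y}{x-y}\right)=\frac{f(x)+f(y)}{f(x)-f(y)}. \] For a field $\mathbb{F}$, $SD(\mathbb{F})$ denotes the set of surjective SD-maps $\mathbb{F}\to\mathbb{F}$, and $\operatorname{Aut}(\mathbb{F})$ its group of field automorphisms; $\operatorname{Aut}(\mathbb{F})\subseteq SD(\mathbb{F})$ always. *)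

From HB Require Import structures.
From mathcomp Require Import all_boot all_order all_algebra all_field.
From mathcomp Require Import boolp.
Set Implicit Arguments. Unset Strict Implicit. Unset Printing Implicit Defensive.
Import Order.TTheory GRing.Theory.
Local Open Scope ring_scope.

Definition SD_map (F F' : fieldType) (f : F -> F') : Prop :=
  forall x y : F, x != y ->
    f x != f y /\ f ((x + y) / (x - y)) = (f x + f y) / (f x - f y).

Definition in_SD (F : fieldType) (f : F -> F) : Prop :=
  SD_map f /\ forall y : F, exists x, f x = y.

Definition is_field_aut (F : fieldType) (f : F -> F) : Prop :=
  [/\ forall x y, f (x + y) = f x + f y,
      forall x y, f (x * y) = f x * f y,
      f 1 = 1 & bijective f].

Definition odd_char (F : fieldType) : Prop :=
  exists p : nat, p \in [pchar F] /\ p != 2%N.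

(* elements of the prime subfield (in positive characteristic it is exactly
   the set of the n%:R) *)
Definition in_prime_subfield (F : fieldType) (c : F) : Prop :=
  exists n : nat, c = n%:R.

Definition algebraic_over_prime (F : fieldType) : Prop :=
  forall x : F, exists q : {poly F},
    [/\ q != 0, forall i, in_prime_subfield q`_i & root q x].

Definition finite_field (F : fieldType) : Prop :=
  exists s : seq F, forall x : F, x \in s.

Definition is_square (F : fieldType) (x : F) : Prop := exists y : F, y ^+ 2 = x.

Definition sq_flip (F : fieldType) (x : F) : F :=
  if `[< is_square x >] then x else - x.

(* An SD-map f of a field of characteristic p <> 2 is injective, multiplicative and odd, and
   satisfies f (x + 1) (f x - 1) = f (x - 1) (f x + 1).  Evaluated at 2, 4 and 5 this forces
   f 2 = 2 or f 2 ^ 2 = -1; in the latter case f 4 = f (-1), so 5 = 0 and f 2 = -2.  The same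
   relation at 2y + 1, y + 1, 2y + 3 and 2y + 2 gives a cubic relation between f y and
   f (y + 1), which, written also for -(y + 1), shows: if f 2 = 2 then f (y + 1) = f y + 1 for
   every y, so f is additive and hence a field automorphism; if f 2 = -2 then no y lies outside
   the prime field, i.e. F = F_5.  Conversely, on F_5 (where x^5 = x) the cube map is an SD-map
   that is not additive, it coincides with the map fixing squares and negating non-squares, and
   2 is a square root of -1 generating F_5^*.  A finite field of odd characteristic has a
   non-square w, and then sq_flip (w + 1) <> sq_flip w + sq_flip 1. *)

From HB Require Import structures.
From mathcomp Require Import all_boot all_order all_algebra all_field.
From mathcomp Require Import boolp ring zify.
Import GRing.Theory.
Local Open Scope ring_scope.
Set Implicit Arguments. Unset Strict Implicit. Unset Printing Implicit Defensive.

Lemma SD_map_inj (F F' : fieldType) (f : F -> F') : SD_map f -> injective f.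
Proof.
move=> fSD x y; apply: contra_eq => neq_xy.
by have [] := fSD x y neq_xy.
Qed.

Lemma inj_surj_bijective (T : Type) (U : Type) (f : T -> U) :
  injective f -> (forall y, exists x, f x = y) -> bijective f.
Proof.
move=> finj fsurj; pose g y := projT1 (cid (fsurj y)).
have fgK : cancel g f by move=> y; rewrite /g; case: cid.
by exists g => // x; apply: finj; rewrite fgK.
Qed.

Lemma field_hom_inj (K L : fieldType) (f : K -> L) :
  {morph f : x y / x + y} -> {morph f : x y / x * y} -> f 1 = 1 -> injective f.
Proof.
move=> fD fM f1 x y fxy; apply/eqP; rewrite -subr_eq0; apply: contraT => xy_neq0.
have fxy0 : f (x - y) = 0 by apply: (addIr (f y)); rewrite -fD subrK fxy add0r.
by have := oner_neq0 L; rewrite -f1 -(mulfV xy_neq0) fM fxy0 mul0r eqxx.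
Qed.

Lemma oppr1_neq1 (F : fieldType) : (2 : F) != 0 -> (-1 : F) != 1.
Proof. by move=> two_neq0; apply: contraNneq two_neq0 => e; rewrite -[2]/(1 + 1) -{1}e addNr. Qed.

Definition SD_cubic (F : fieldType) (c a b : F) :=
  c * b ^+ 3 - c * b ^+ 2 - c * a ^+ 2 * b - c * a ^+ 2 - 2 * a.

Lemma SD_cubic2_cases (F : fieldType) (a b : F) : (2 : F) != 0 ->
  SD_cubic 2 a b = 0 -> SD_cubic 2 (- b) (- a) = 0 ->
  [\/ b = a + 1, a + b = 0 | b = a - 1 /\ 2 * a ^+ 2 - 2 * a + 1 = 0].
Proof.
move=> two_neq0 K1 K2; have [-> | b_neq] := eqVneq b (a + 1); first exact: Or31.
have c_neq0 : 2 * (b - a - 1) != 0.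
  by rewrite mulf_neq0 // (_ : b - a - 1 = b - (a + 1)) ?subr_eq0 //; ring.
have N1 : b ^+ 2 + a * b + a = 0.
  by apply: (mulfI c_neq0); rewrite mulr0 -K1 /SD_cubic; ring.
have N2 : a ^+ 2 + a * b - b = 0.
  by apply: (mulfI c_neq0); rewrite mulr0 -K2 /SD_cubic; ring.
have : (a + b) * (b - a + 1) = 0.
  have -> : (a + b) * (b - a + 1) = (b ^+ 2 + a * b + a) - (a ^+ 2 + a * b - b) by ring.
  by rewrite N1 N2 subrr.
move/eqP; rewrite mulf_eq0 => /orP[/eqP ab | /eqP ba]; first exact: Or32.
have b_eq : b = a - 1 by rewrite -[LHS]subr0 -ba; ring.
by apply: Or33; split=> //; rewrite -N1 b_eq; ring.
Qed.

Lemma SD_cubicN2_cases (F : fieldType) (a b : F) : (2 : F) != 0 -> (5 : F) = 0 ->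
  SD_cubic (-2) a b = 0 -> SD_cubic (-2) (- b) (- a) = 0 ->
  a + b = 0 \/ (a - 1) * (a + 1) * (a - 2) * (a + 2) = 0.
Proof.
move=> two_neq0 five0 K1 K2.
have : 2 * (a + b) * ((a - b) ^+ 2 + 1) = 0.
  have -> : 2 * (a + b) * ((a - b) ^+ 2 + 1) = SD_cubic (-2) (- b) (- a) - SD_cubic (-2) a b.
    by rewrite /SD_cubic; ring.
  by rewrite K1 K2 subrr.
move/eqP; rewrite !mulf_eq0 (negbTE two_neq0) /= => /orP[/eqP ab | /eqP ab]; [by left | right].
have : (b - a - 2) * (b - a + 2) = 0.
  have -> : (b - a - 2) * (b - a + 2) = ((a - b) ^+ 2 + 1) - 5 by ring.
  by rewrite ab five0 subrr.
move/eqP; rewrite mulf_eq0 => /orP[/eqP ba | /eqP ba].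
  have b_eq : b = a + 2 by rewrite -[LHS]subr0 -ba; ring.
  have a12 : (a - 1) * (a - 2) = 0.
    apply: (mulfI (mulf_neq0 two_neq0 two_neq0)); rewrite mulr0.
    have -> : 2 * 2 * ((a - 1) * (a - 2)) = - SD_cubic (-2) a b - 6 * a * 5.
      by rewrite b_eq /SD_cubic; ring.
    by rewrite K1 five0 mulr0 oppr0 addr0.
  have -> : (a - 1) * (a + 1) * (a - 2) * (a + 2) = (a - 1) * (a - 2) * ((a + 1) * (a + 2)).
    by ring.
  by rewrite a12 mul0r.
have b_eq : b = a - 2 by rewrite -[LHS]subr0 -ba; ring.
have a12 : (a + 1) * (a + 2) = 0.
  apply: (mulfI two_neq0); rewrite mulr0.
  have -> : 2 * ((a + 1) * (a + 2)) = SD_cubic (-2) a b - (2 * a ^+ 2 - 8 * a + 4) * 5.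
    by rewrite b_eq /SD_cubic; ring.
  by rewrite K1 five0 mulr0 subrr.
have -> : (a - 1) * (a + 1) * (a - 2) * (a + 2) = (a + 1) * (a + 2) * ((a - 1) * (a - 2)).
  by ring.
by rewrite a12 mul0r.
Qed.

Section SDMap.

Variables (F : fieldType) (f : F -> F).
Hypotheses (fSD : SD_map f) (two_neq0 : (2 : F) != 0).

Let finj := SD_map_inj fSD.

Lemma SD_map_ratio x y : x != y -> f ((x + y) / (x - y)) = (f x + f y) / (f x - f y).
Proof. by move=> neq_xy; have [] := fSD neq_xy. Qed.

Lemma SD_map0 : f 0 = 0.
Proof.
have N1_neq0 : (-1 : F) != 0 by rewrite oppr_eq0 oner_neq0.
have e1 := SD_map_ratio (oner_neq0 F); have eN1 := SD_map_ratio N1_neq0.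
rewrite !(addr0, subr0) !divff ?oner_neq0 // in e1 eN1.
have [f10_neq0 fN10_neq0] : f 1 - f 0 != 0 /\ f (-1) - f 0 != 0.
  by rewrite !subr_eq0 !(inj_eq finj) oner_neq0.
move/eqP: eN1; rewrite e1 eqr_div // => /eqP E.
have : 2 * f 0 * (f (-1) - f 1) = 0.
  have -> : 2 * f 0 * (f (-1) - f 1) =
    (f 1 + f 0) * (f (-1) - f 0) - (f (-1) + f 0) * (f 1 - f 0) by ring.
  by rewrite E subrr.
move/eqP; rewrite !mulf_eq0 (negbTE two_neq0) subr_eq0 (inj_eq finj).
by rewrite (negbTE (oppr1_neq1 two_neq0)) orbF => /eqP.
Qed.

Lemma SD_map_neq0 x : x != 0 -> f x != 0.
Proof. by move=> x_neq0; rewrite -SD_map0 (inj_eq finj). Qed.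

Lemma SD_map1 : f 1 = 1.
Proof.
have := SD_map_ratio (oner_neq0 F).
by rewrite !(addr0, subr0) SD_map0 addr0 subr0 divr1 divff // SD_map_neq0 ?oner_neq0.
Qed.

Lemma SD_mapN1 : f (-1) = -1.
Proof.
have := @SD_map_ratio 0 1; rewrite eq_sym oner_neq0 => /(_ isT).
by rewrite SD_map0 SD_map1 !add0r !mul1r invrN1.
Qed.

Lemma SD_map_divK x y : y != 0 -> f (x / y) * f y = f x.
Proof.
move=> y_neq0; have [-> | neq_xy] := eqVneq x y; first by rewrite divff // SD_map1 mul1r.
set t := x / y.
have t_neq1 : t != 1 by apply: contraNneq neq_xy => t1; rewrite -(divfK y_neq0 x) -/t t1 mul1r.
have xy_neq0 : x - y != 0 by rewrite subr_eq0.
have e := SD_map_ratio neq_xy.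
rewrite (_ : (x + y) / (x - y) = (t + 1) / (t - 1)) in e; last first.
  by rewrite /t; field; rewrite y_neq0 mulN1r xy_neq0.
rewrite SD_map_ratio // SD_map1 in e.
have ft_neq1 : f t - 1 != 0 by rewrite subr_eq0 -SD_map1 (inj_eq finj).
have fxy_neq0 : f x - f y != 0 by rewrite subr_eq0 (inj_eq finj).
move/eqP: e; rewrite eqr_div // => /eqP E.
have : 2 * (f x - f t * f y) = 0.
  have -> : 2 * (f x - f t * f y) =
    (f t + 1) * (f x - f y) - (f x + f y) * (f t - 1) by ring.
  by rewrite E subrr.
by move/eqP; rewrite mulf_eq0 (negbTE two_neq0) subr_eq0 => /eqP.
Qed.

Lemma SD_mapM x y : f (x * y) = f x * f y.
Proof.
have [-> | y_neq0] := eqVneq y 0; first by rewrite mulr0 SD_map0 mulr0.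
by rewrite -(SD_map_divK (x * y) y_neq0) mulfK.
Qed.

Lemma SD_mapN x : f (- x) = - f x.
Proof. by rewrite -mulN1r SD_mapM SD_mapN1 mulN1r. Qed.

Lemma SD_map_succ_pred x : f (x + 1) * (f x - 1) = f (x - 1) * (f x + 1).
Proof.
have [-> | x_neq1] := eqVneq x 1; first by rewrite SD_map1 subrr mulr0 SD_map0 mul0r.
have x1_neq0 : x - 1 != 0 by rewrite subr_eq0.
have fx1_neq0 : f x - 1 != 0 by rewrite subr_eq0 -SD_map1 (inj_eq finj).
by rewrite -(SD_map_divK (x + 1) x1_neq0) SD_map_ratio // SD_map1; field.
Qed.

Lemma SD_map_succ_opp y : f y + f (y + 1) = 0 -> 2 * y + 1 = 0.
Proof.
move/eqP; rewrite addrC addr_eq0 -SD_mapN => /eqP/finj e.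
have -> : 2 * y + 1 = (y + 1) - - y by ring.
by rewrite e subrr.
Qed.

Lemma SD_map_additive : (forall x, f (x + 1) = f x + 1) -> {morph f : x y / x + y}.
Proof.
move=> fS x y; have [-> | y_neq0] := eqVneq y 0; first by rewrite addr0 SD_map0 addr0.
rewrite (_ : x + y = (x / y + 1) * y); last by field.
by rewrite SD_mapM fS mulrDl mul1r SD_map_divK.
Qed.

Lemma SD_map_nat : f 2 = 2 -> forall n : nat, f n%:R = n%:R.
Proof.
move=> f2; suff fn n : f n%:R = n%:R /\ f n.+1%:R = n.+1%:R by move=> n; case: (fn n).
elim: n => [|n [IHn IHn1]]; first by rewrite SD_map0 SD_map1.
split=> //; have := SD_map_succ_pred n.+1%:R.
have succ : (n.+1%:R : F) + 1 = n.+2%:R by rewrite natr1.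
have pred : (n.+1%:R : F) - 1 = n%:R by rewrite -natr1 addrK.
rewrite succ pred IHn IHn1 pred.
(* The recurrence leaves f (n + 2) undetermined exactly when n = 0 in F. *)
have [n0 | n_neq0] := eqVneq (n%:R : F) 0.
  by rewrite -addn2 natrD n0 add0r f2.
by move=> e; apply: (mulIf n_neq0); rewrite e mulrC succ.
Qed.

Lemma SD_map2 : (3 : F) != 0 -> f 2 = 2 \/ f 2 ^+ 2 = -1.
Proof.
move=> three_neq0.
have e2 := SD_map_succ_pred 2; have e4 := SD_map_succ_pred 4.
have e5 := SD_map_succ_pred 5.
have [n3 n1 n5 n4] : [/\ 2 + 1 = 3 :> F, 2 - 1 = 1 :> F, 4 + 1 = 5 :> F & 4 = 2 * 2 :> F].
  by split; ring.
have [n3' n6 n4'] : [/\ 4 - 1 = 3 :> F, 5 + 1 = 2 * 3 :> F & 5 - 1 = 2 * 2 :> F].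
  by split; ring.
rewrite n3 n1 SD_map1 in e2; rewrite n5 n3' n4 SD_mapM in e4; rewrite n6 n4' !SD_mapM in e5.
have c_neq0 : f 2 != 0 by apply: SD_map_neq0.
have c1_neq0 : f 2 + 1 != 0.
  by rewrite addr_eq0 -SD_mapN1 (inj_eq finj) -subr_eq0 opprK n3.
set c := f 2 in e2 e4 e5 c_neq0 c1_neq0 *; set d := f 3 in e2 e4 e5; set e := f 5 in e4 e5.
(* A polynomial combination of the three relations eliminating d = f 3 and e = f 5. *)
have key : 2 * c * c * (c + 1) * ((c ^+ 2 + 1) * (c - 2)) =
  c * ((c - 1) * (c - 1) * (d - c) * (e * (c * c - 1) - d * (c * c + 1)) +
       ((c - 1) * (d * (c * c + 1) - c * c + 1) + (c * c + 1) * (- c * c + 2 * c + 1)) *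
         (d * (c - 1) - 1 * (c + 1)))
  - (c - 1) * (c - 1) * (c * c - 1) * (c * d * (e - 1) - c * c * (e + 1)) by ring.
rewrite e2 e4 e5 !subrr !mulr0 !addr0 subr0 in key.
move/eqP: key; rewrite mulr0 !mulf_eq0 (negbTE two_neq0) (negbTE c_neq0) (negbTE c1_neq0) /=.
by rewrite subr_eq0 addr_eq0 => /orP [/eqP -> | /eqP ->]; [right | left].
Qed.

Lemma SD_map_cubic y : y != 0 -> y != -1 -> SD_cubic (f 2) (f y) (f (y + 1)) = 0.
Proof.
move=> y_neq0 y_neqN1.
have e1 := SD_map_succ_pred (2 * y + 1); have e2 := SD_map_succ_pred (y + 1).
have e3 := SD_map_succ_pred (2 * y + 3); have e4 := SD_map_succ_pred (2 * (y + 1)).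
have [n1 n2 n3] : [/\ 2 * y + 1 + 1 = 2 * (y + 1), 2 * y + 1 - 1 = 2 * y & y + 1 - 1 = y].
  by split; ring.
have [n4 n5 n6 n7] : [/\ 2 * y + 3 + 1 = 2 * (y + 2), 2 * y + 3 - 1 = 2 * (y + 1),
  2 * (y + 1) + 1 = 2 * y + 3 & 2 * (y + 1) - 1 = 2 * y + 1] by split; ring.
have n8 : y + 1 + 1 = y + 2 by ring.
rewrite n1 n2 !SD_mapM in e1; rewrite n3 n8 in e2.
rewrite n4 n5 !SD_mapM in e3; rewrite n6 n7 !SD_mapM in e4.
have b_neq0 : f (y + 1) != 0 by rewrite SD_map_neq0 // addr_eq0.
have c_neq0 : f 2 != 0 by apply: SD_map_neq0.
set a := f y in e1 e2 e3 e4 *; set b := f (y + 1) in e1 e2 e3 e4 b_neq0 *.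
set c := f 2 in e1 e2 e3 e4 c_neq0 *; set u := f (2 * y + 1) in e1 e4.
set v := f (2 * y + 3) in e3 e4; set w := f (y + 2) in e2 e3.
(* A polynomial combination of the four relations eliminating u, v and w. *)
have key : c * 2 * b * SD_cubic c a b =
  c * (b - a) * (w - b) * (b - 1) * (v * (c * b - 1) - u * (c * b + 1))
  - (b - a) * (b - 1) * (c * b - 1) * (c * w * (v - 1) - c * b * (v + 1))
  + (w - b) * (b - 1) * (c * b + 1) * (c * b * (u - 1) - c * a * (u + 1))
  - c * ((b - a) * (c * b - 1) - (c * b + 1) * (a + b)) * (w * (b - 1) - a * (b + 1)).
  by rewrite /SD_cubic; ring.
rewrite e1 e2 e3 e4 !subrr !mulr0 subr0 addr0 subr0 in key.
move/eqP: key; rewrite !mulf_eq0 (negbTE two_neq0) (negbTE c_neq0) (negbTE b_neq0) /=.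
by move/eqP.
Qed.

End SDMap.

Lemma in_prime_subfieldD (F : fieldType) (x y : F) :
  in_prime_subfield x -> in_prime_subfield y -> in_prime_subfield (x + y).
Proof. by move=> [m ->] [n ->]; exists (m + n)%N; rewrite natrD. Qed.

Lemma in_prime_subfieldM (F : fieldType) (x y : F) :
  in_prime_subfield x -> in_prime_subfield y -> in_prime_subfield (x * y).
Proof. by move=> [m ->] [n ->]; exists (m * n)%N; rewrite natrM. Qed.

Definition prime_field5 (F : fieldType) :=
  (5 : F) = 0 /\ forall x : F, in_prime_subfield x.

Section OddCharacteristic.

Variables (F : fieldType) (p : nat).
Hypotheses (charFp : p \in [pchar F]) (p_neq2 : p != 2%N).

Lemma two_neq0_pchar : (2 : F) != 0.
Proof.
by rewrite -(dvdn_pcharf charFp) dvdn_prime2 // (pcharf_prime charFp).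
Qed.

Lemma in_prime_subfieldN (x : F) : in_prime_subfield x -> in_prime_subfield (- x).
Proof.
move=> [n ->]; exists (n * p.-1)%N.
have p_gt0 : (0 < p)%N by rewrite prime_gt0 // (pcharf_prime charFp).
apply/eqP; rewrite eq_sym -addr_eq0 -natrD -{2}[n]muln1 -mulnDr addn1 prednK //.
by rewrite natrM (pcharf0 charFp) mulr0.
Qed.

Lemma in_prime_subfield_half (y : F) : 2 * y + 1 = 0 -> in_prime_subfield y.
Proof.
move=> y_half; set k := p./2; exists k; apply: (mulfI two_neq0_pchar).
have p_odd : odd p.
  by move: p_neq2; case: (even_prime (pcharf_prime charFp)) => ->.
have p_eq : p = (k * 2).+1 by rewrite /k -{1}(odd_double_half p) p_odd -muln2.
have k2 : 2 * k%:R = -1 :> F.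
  by apply/eqP; rewrite -addr_eq0 mulrC -natrM natr1 -p_eq (pcharf0 charFp).
by rewrite k2; apply/eqP; rewrite -addr_eq0 y_half.
Qed.

Variable f : F -> F.
Hypothesis fSD : SD_map f.

Let two_neq0 := two_neq0_pchar.
Let finj := SD_map_inj fSD.

Lemma SD_map_cubic_nonprime y : ~ in_prime_subfield y ->
  SD_cubic (f 2) (f y) (f (y + 1)) = 0 /\ SD_cubic (f 2) (- f (y + 1)) (- f y) = 0.
Proof.
move=> y_nonprime.
have y_neq0 : y != 0 by apply: contra_not_neq y_nonprime => ->; exists 0%N.
have y_neqN1 : y != -1.
  by apply: contra_not_neq y_nonprime => ->; apply: in_prime_subfieldN; exists 1%N.
split; first exact: SD_map_cubic.
have := @SD_map_cubic _ _ fSD two_neq0 (- (y + 1)).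
rewrite (_ : - (y + 1) + 1 = - y); last by ring.
rewrite !(SD_mapN fSD two_neq0); apply.
  by rewrite oppr_eq0 addr_eq0.
by rewrite eqr_opp -subr_eq0 addrK.
Qed.

Let nonprime_sum_succ y : ~ in_prime_subfield y -> f y + f (y + 1) <> 0.
Proof. by move=> y_nonprime /(SD_map_succ_opp fSD two_neq0)/in_prime_subfield_half. Qed.

Lemma SD_map_succ_nonprime y : f 2 = 2 -> ~ in_prime_subfield y ->
  f (y + 1) = f y + 1 \/ f (y + 1) = f y - 1 /\ 2 * f y ^+ 2 - 2 * f y + 1 = 0.
Proof.
move=> f2 y_nonprime; have [K1 K2] := SD_map_cubic_nonprime y_nonprime.
rewrite f2 in K1 K2.
case: (SD_cubic2_cases two_neq0 K1 K2) => [|/(nonprime_sum_succ y_nonprime) //|];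
  by [left | right].
Qed.

Lemma SD_map_succ x : f 2 = 2 -> f (x + 1) = f x + 1.
Proof.
move=> f2; have [[n ->] | x_nonprime] := pselect (in_prime_subfield x).
  by rewrite natr1 !(SD_map_nat fSD two_neq0 f2) natr1.
have [// | [fx1 fx_root]] := SD_map_succ_nonprime f2 x_nonprime.
have x1_nonprime : ~ in_prime_subfield (x + 1).
  move=> x1_prime; apply: x_nonprime; rewrite -(addrK 1 x).
  by apply: in_prime_subfieldD => //; apply: in_prime_subfieldN; exists 1%N.
exfalso; have [fx2 | [fx2 fx1_root]] := SD_map_succ_nonprime f2 x1_nonprime.
  have /finj/eqP : f (x + 1 + 1) = f x by rewrite fx2 fx1 subrK.
  by rewrite -subr_eq0 (_ : x + 1 + 1 - x = 2) ?(negbTE two_neq0) //; ring.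
rewrite fx1 in fx1_root.
have : 2 * 2 * (f x - 1) = 0.
  have -> : 2 * 2 * (f x - 1) =
    (2 * f x ^+ 2 - 2 * f x + 1) - (2 * (f x - 1) ^+ 2 - 2 * (f x - 1) + 1) by ring.
  by rewrite fx_root fx1_root subrr.
move/eqP; rewrite !mulf_eq0 (negbTE two_neq0) subr_eq0 -(SD_map1 fSD two_neq0) /=.
by move/eqP/finj => x1; apply: x_nonprime; exists 1%N.
Qed.

Lemma SD_map_prime_subfield (y : F) : (5 : F) = 0 -> f 2 = -2 -> in_prime_subfield y.
Proof.
move=> five0 f2; apply: contrapT => y_nonprime.
have f_prime (z : F) : in_prime_subfield z -> f y <> f z.
  by move=> z_prime /finj yz; rewrite yz in y_nonprime.
have prime1 : in_prime_subfield (1 : F) by exists 1%N.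
have prime2 : in_prime_subfield (2 : F) by exists 2%N.
have [K1 K2] := SD_map_cubic_nonprime y_nonprime; rewrite f2 in K1 K2.
case: (SD_cubicN2_cases two_neq0 five0 K1 K2) => [/(nonprime_sum_succ y_nonprime) // |].
move/eqP; rewrite !mulf_eq0 !subr_eq0 !addr_eq0 => /orP[/orP[/orP[] | ] | ] /eqP fy.
- by apply: (f_prime 1); rewrite // (SD_map1 fSD two_neq0).
- by apply: (f_prime (-1)); rewrite ?(SD_mapN1 fSD two_neq0) //; apply: in_prime_subfieldN.
- apply: (f_prime (-2)); first exact: in_prime_subfieldN.
  by rewrite fy (SD_mapN fSD two_neq0) f2 opprK.
- by apply: (f_prime 2); rewrite // f2.
Qed.

Lemma SD_map_additive_or_prime_field5 : {morph f : x y / x + y} \/ prime_field5 F.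
Proof.
have fM := SD_mapM fSD two_neq0; have fN1 := SD_mapN1 fSD two_neq0.
suff [f2 | [five0 f2]] : f 2 = 2 \/ (5 : F) = 0 /\ f 2 = -2.
- by left; apply: (SD_map_additive fSD two_neq0) => x; apply: SD_map_succ.
- by right; split=> // y; apply: SD_map_prime_subfield.
have [three0 | three_neq0] := eqVneq (3 : F) 0.
  have N1_2 : -1 = 2 :> F by rewrite -[RHS]subr0 -three0; ring.
  by left; rewrite -N1_2 fN1.
have [|f2_sq] := SD_map2 fSD two_neq0 three_neq0; first by left.
have five0 : (5 : F) = 0.
  have /finj four_N1 : f (2 * 2) = f (-1) by rewrite fM -expr2 f2_sq fN1.
  have -> : (5 : F) = 2 * 2 + 1 by ring.
  by rewrite four_N1 addNr.
have : (f 2 - 2) * (f 2 + 2) = 0.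
  have -> : (f 2 - 2) * (f 2 + 2) = f 2 ^+ 2 + 1 - 5 by ring.
  by rewrite f2_sq five0 addNr subrr.
move/eqP; rewrite mulf_eq0 subr_eq0 addr_eq0 => /orP[/eqP f2 | /eqP f2]; first by left.
by right.
Qed.

End OddCharacteristic.

Lemma field_aut_SD (F : fieldType) (f : F -> F) : is_field_aut f -> in_SD f.
Proof.
move=> [fD fM f1 [g fK gK]].
have finj : injective f := can_inj fK.
have f0 : f 0 = 0 by apply: (addIr (f 0)); rewrite -fD !add0r.
have fN x : f (- x) = - f x by apply: (addIr (f x)); rewrite -fD !addNr.
have fV x : f x^-1 = (f x)^-1.
  have [-> | x_neq0] := eqVneq x 0; first by rewrite invr0 f0 invr0.
  have fx_neq0 : f x != 0 by rewrite -f0 (inj_eq finj).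
  by apply: (mulfI fx_neq0); rewrite -fM !mulfV.
split=> [x y neq_xy | y]; last by exists (g y).
by rewrite (inj_eq finj) neq_xy fM fV fD fD fN.
Qed.

Lemma SD_additive_field_aut (F : fieldType) (f : F -> F) :
  (2 : F) != 0 -> in_SD f -> {morph f : x y / x + y} -> is_field_aut f.
Proof.
move=> two_neq0 [fSD fsurj] fD; split=> //; first exact: SD_mapM.
  exact: SD_map1.
exact: inj_surj_bijective (SD_map_inj fSD) fsurj.
Qed.

Lemma pchar5 (F : fieldType) : (5 : F) = 0 -> 5%N \in [pchar F].
Proof. by move=> five0; apply/andP; split=> //; rewrite five0. Qed.

Lemma F5_isoP (F : fieldType) :
  (exists f : 'F_5 -> F, [/\ {morph f : x y / x + y}, {morph f : x y / x * y},
                            f 1 = 1 & bijective f]) <-> prime_field5 F.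
Proof.
split=> [[f [fD fM f1 [g fK gK]]] | [five0 F_prime]].
  have f0 : f 0 = 0 by apply: (addIr (f 0)); rewrite -fD !add0r.
  have fn n : f n%:R = n%:R by elim: n => [|n IHn]; rewrite ?f0 // -!natr1 fD IHn f1.
  have five0 : 5%:R = 0 :> 'F_5 by apply/eqP.
  split; first by rewrite -(fn 5%N) five0 f0.
  by move=> y; exists (val (g y)); rewrite -fn natr_Zp gK.
have natr_mod := GRing.natr_mod_pchar (pchar5 five0).
pose f (x : 'F_5) : F := (val x)%:R.
have fD : {morph f : x y / x + y}.
  by move=> x y; rewrite /f /= -[(Zp_trunc _).+2]/5%N natr_mod natrD.
have fM : {morph f : x y / x * y}.
  by move=> x y; rewrite /f /= -[(Zp_trunc _).+2]/5%N natr_mod natrM.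
exists f; split=> //; apply: inj_surj_bijective; first exact: field_hom_inj.
move=> y; have [n ->] := F_prime y; exists (inZp n).
by rewrite /f /= -[(Zp_trunc _).+2]/5%N natr_mod.
Qed.

Section PrimeField5.

Variable F : fieldType.
Hypothesis F5 : prime_field5 F.

Let five0 : (5 : F) = 0 := F5.1.
Let char5 : 5%N \in [pchar F] := pchar5 five0.

Let two_sq : (2 : F) ^+ 2 = -1.
Proof. by rewrite -[RHS]addr0 -five0; ring. Qed.

Lemma prime_field5_frobenius (x : F) : x ^+ 5 = x.
Proof.
by have [n ->] := F5.2 x; rewrite -(pFrobenius_autE char5) pFrobenius_aut_nat.
Qed.

Let cube_cube : involutive (fun x : F => x ^+ 3).
Proof.
move=> x; rewrite -exprM (_ : (3 * 3 = 5 + 4)%N) // exprD prime_field5_frobenius.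
by rewrite -exprS prime_field5_frobenius.
Qed.

Lemma prime_field5_cube_SD : in_SD (fun x : F => x ^+ 3).
Proof.
split=> [x y neq_xy | y]; last by exists (y ^+ 3); rewrite cube_cube.
have neq_cube : x ^+ 3 != y ^+ 3 by apply: contra neq_xy => /eqP/(inv_inj cube_cube) ->.
split=> //; rewrite expr_div_n; apply/eqP.
rewrite eqr_div ?expf_neq0 ?subr_eq0 //; apply/eqP/subr0_eq.
have -> : (x + y) ^+ 3 * (x ^+ 3 - y ^+ 3) - (x ^+ 3 + y ^+ 3) * (x - y) ^+ 3
   = 6 * (x ^+ 5 * y - x * y ^+ 5) by ring.
by rewrite !prime_field5_frobenius subrr mulr0.
Qed.

Lemma prime_field5_cube_not_aut : ~ is_field_aut (fun x : F => x ^+ 3).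
Proof.
move=> [fD _ _ _]; have := fD 1 1; rewrite !expr1n => e.
have : (1 : F) = 0.
  have -> : (1 : F) = (1 + 1) ^+ 3 - (1 + 1) - 5 by ring.
  by rewrite e five0 subrr subr0.
by move/eqP; rewrite oner_eq0.
Qed.

Lemma prime_field5_sq_flip (x : F) : sq_flip x = x ^+ 3.
Proof.
rewrite /sq_flip; case: asboolP => [[y <-] | x_nsq].
  by rewrite -exprM (_ : (2 * 3 = 5 + 1)%N) // exprD prime_field5_frobenius expr1 -expr2.
have x_neq0 : x != 0 by apply: contra_not_neq x_nsq => ->; exists 0; rewrite expr0n.
have sq_neq1 : x ^+ 2 - 1 != 0.
  rewrite subr_eq0 -subr_eq0 subr_sqr_1 mulf_eq0 subr_eq0 addr_eq0.
  apply/negP => /orP[/eqP x1 | /eqP xN1]; apply: x_nsq.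
    by exists 1; rewrite x1 expr1n.
  by exists 2; rewrite xN1 two_sq.
have : x * (x ^+ 2 - 1) * (x ^+ 2 + 1) = 0.
  have -> : x * (x ^+ 2 - 1) * (x ^+ 2 + 1) = x ^+ 5 - x by ring.
  by rewrite prime_field5_frobenius subrr.
move/eqP; rewrite !mulf_eq0 (negbTE x_neq0) (negbTE sq_neq1) /= => /eqP x2.
have -> : x ^+ 3 = x * (x ^+ 2 + 1) - x by ring.
by rewrite x2 mulr0 sub0r.
Qed.

Lemma prime_field5_sqrtN1_generator :
  exists i : F, i ^+ 2 = -1 /\ forall x : F, x != 0 -> exists n : nat, x = i ^+ n.
Proof.
exists 2; split=> // x x_neq0; have [n x_n] := F5.2 x.
rewrite -(GRing.natr_mod_pchar char5) in x_n; rewrite {}x_n in x_neq0 *.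
have : (n %% 5 < 5)%N by rewrite ltn_pmod.
case: (n %% 5)%N x_neq0 => [|[|[|[|[|k]]]]] //=; rewrite ?eqxx // => _ _.
- by exists 0%N.
- by exists 1%N.
- by exists 3%N; rewrite exprS two_sq -[RHS]addr0 -five0; ring.
- by exists 2%N; rewrite two_sq -[RHS]addr0 -five0; ring.
Qed.

End PrimeField5.

Lemma sqrtN1_generator_prime_field5 (F : fieldType) : (2 : F) != 0 ->
  (exists i : F, i ^+ 2 = -1 /\ forall x : F, x != 0 -> exists n : nat, x = i ^+ n) ->
  prime_field5 F.
Proof.
move=> two_neq0 [i [i_sq i_gen]].
have unit4 (x : F) : x != 0 -> x ^+ 4 = 1.
  move=> x_neq0; have [n ->] := i_gen x x_neq0.
  by rewrite -exprM mulnC exprM (exprM i 2 2) i_sq sqrrN !expr1n.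
have i1_neq0 : 1 + i != 0.
  apply: contraNneq two_neq0 => i1; have iN1 : i = -1 by apply/eqP; rewrite -addr_eq0 addrC i1.
  by move: i_sq; rewrite iN1 sqrrN expr1n => /eqP; rewrite -subr_eq0 opprK.
have five0 : (5 : F) = 0.
  have := unit4 _ i1_neq0.
  have -> : (1 + i) ^+ 4 = -4 + (i ^+ 2 + 1) * (i ^+ 2 + 4 * i + 5) by ring.
  rewrite i_sq addNr mul0r addr0 => N4_1.
  have -> : (5 : F) = 1 - -4 by ring.
  by rewrite -[X in X - _]N4_1 subrr.
split=> // x; have [-> | x_neq0] := eqVneq x 0; first by exists 0%N.
have [n ->] := i_gen x x_neq0.
have i_prime : in_prime_subfield i.
  have : (i - 2) * (i - 3) = 0.
    have -> : (i - 2) * (i - 3) = (i ^+ 2 + 1) - 5 * (i - 1) by ring.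
    by rewrite i_sq addNr five0 mul0r subrr.
  move/eqP; rewrite mulf_eq0 !subr_eq0 => /orP[/eqP -> | /eqP ->]; by [exists 2%N | exists 3%N].
by elim: n => [|n IHn]; [exists 1%N | rewrite exprS; apply: in_prime_subfieldM].
Qed.

Lemma finite_not_surjective (T : eqType) (s : seq T) (f : T -> T) (a b : T) :
  (forall x, x \in s) -> a != b -> f a = f b -> ~ (forall y, exists x, f x = y).
Proof.
move=> s_full neq_ab fab f_surj; set t := undup s.
have t_uniq : uniq t := undup_uniq s.
have t_full x : x \in t by rewrite mem_undup.
have t_sub : {subset t <= map f (rem b t)}.
  move=> y _; have [x <-] := f_surj y.
  have [-> | x_neq_b] := eqVneq x b; [rewrite -fab; apply: map_f | apply: map_f];
    by rewrite (mem_rem_uniq _ t_uniq) inE t_full ?neq_ab ?x_neq_b.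
have := uniq_leq_size t_uniq t_sub; rewrite size_map size_rem //.
have : (0 < size t)%N by rewrite -has_predT; apply/hasP; exists b.
lia.
Qed.

Lemma exists_nonsquare (F : fieldType) :
  (2 : F) != 0 -> finite_field F -> exists w : F, ~ is_square w.
Proof.
move=> two_neq0 [s s_full]; apply: contrapT => all_sq.
apply: (finite_not_surjective (f := fun x : F => x ^+ 2) s_full (oppr1_neq1 two_neq0)).
  by rewrite sqrrN.
by move=> w; apply: contrapT => w_nsq; apply: all_sq; exists w.
Qed.

Lemma sq_flip_nonadditive (F : fieldType) (w : F) :
  (2 : F) != 0 -> ~ is_square w -> sq_flip (w + 1) <> sq_flip w + sq_flip 1.
Proof.
move=> two_neq0 w_nsq; have sq1 : is_square (1 : F) by exists 1; rewrite expr1n.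
rewrite /sq_flip (asboolF w_nsq) (asboolT sq1).
case: asboolP => _ e.
  suff w0 : w = 0 by apply: w_nsq; exists 0; rewrite w0 expr0n.
  apply: (mulfI two_neq0); rewrite mulr0.
  have -> : 2 * w = (w + 1) - (- w + 1) by ring.
  by rewrite e subrr.
have two_eq : (2 : F) = (- w + 1) + (w + 1) by ring.
by move: two_neq0; rewrite two_eq -e addNr eqxx.
Qed.

Unset Implicit Arguments.

Theorem corollary4p1 (F : fieldType) :
  odd_char F -> algebraic_over_prime F ->
  let P1 := exists f : 'F_5 -> F,
      [/\ forall x y, f (x + y) = f x + f y,
          forall x y, f (x * y) = f x * f y,
          f 1 = 1 & bijective f] in
  let P2 := (forall f : F -> F, is_field_aut f -> in_SD f) /\
            (exists f : F -> F, in_SD f /\ ~ is_field_aut f) in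
  let P3 := SD_map (@sq_flip F) in
  let P4 := exists i : F, i ^+ 2 = -1 /\
              forall x : F, x != 0 -> exists n : nat, x = i ^+ n in
  (P1 <-> P2) /\ (P1 <-> P4) /\ (finite_field F -> (P1 <-> P3)).
Proof.
move=> [p [charFp p_neq2]] _ P1 P2 P3 P4.
have two_neq0 := two_neq0_pchar charFp p_neq2.
have P1E : P1 <-> prime_field5 F := F5_isoP F.
rewrite P1E; split; [|split].
- split=> [F5 | [_ [f [fSD f_not_aut]]]].
    split; first exact: field_aut_SD.
    exists (fun x => x ^+ 3).
    by split; [exact: prime_field5_cube_SD | exact: prime_field5_cube_not_aut].
  have [fD | //] := SD_map_additive_or_prime_field5 charFp p_neq2 fSD.1.
  by case: f_not_aut; apply: SD_additive_field_aut.
- by split; [exact: prime_field5_sqrtN1_generator | exact: sqrtN1_generator_prime_field5].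
- move=> F_finite; split=> [F5 x y | flipSD].
    by rewrite !(prime_field5_sq_flip F5); apply: (prime_field5_cube_SD F5).1.
  have [flipD | //] := SD_map_additive_or_prime_field5 charFp p_neq2 flipSD.
  have [w w_nsq] := exists_nonsquare two_neq0 F_finite.
  by case: (sq_flip_nonadditive two_neq0 w_nsq).
Qed.
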